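(* Let $R$ be a Dedekind domain with fraction field $K$ and let $C$ be a nonzero ideal of $R$. Let $E$ be the set of fractional ideals of $R$ in $K$ containing $R$, and define subsets $A_0\subseteq A_1\subseteq\cdots$ of $E$ by $A_0=\{R\}$ and, for $i>0$, $$A_i=A_{i-1}\cup\{I\in E:\ \forall x\in IC\setminus C\ \exists y\in C \text{ such that } (x-y)^{-1}IC\in A_{i-1}\}.$$ If $i\ge 1$ and $I\in A_i\setminus A_{i-1}$, then the ideal class of $I$ equals the ideal class of $C^{-i}$ in the class group of $R$.
   Context: $[J]$ denotes the class of a fractional ideal $J$ in the ideal class group of $R$. *)

From HB Require Import structures.
From mathcomp Require Import all_boot all_order all_algebra.
Set Implicit Arguments. Unset Strict Implicit. Unset Printing Implicit Defensive.
Import Order.TTheory GRing.Theory Num.Theory.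
Local Open Scope ring_scope.

(* Subsets of a field K are represented as predicates K -> Prop.
   All notions below are invariant under extensional equality. *)
Section Ideals.
Variable K : fieldType.
Implicit Types (R I J : K -> Prop).

Definition is_subring R : Prop :=
  [/\ R 0, R 1, (forall x y, R x -> R y -> R (x - y))
    & (forall x y, R x -> R y -> R (x * y))].

Definition is_frac_field R : Prop :=
  forall k : K, exists a b, [/\ R a, R b, b != 0 & k = a / b].

Definition set_eq I J : Prop := forall x, I x <-> J x.

Definition is_submodule R I : Prop :=
  [/\ I 0, (forall x y, I x -> I y -> I (x + y))
    & (forall r x, R r -> I x -> I (r * x))].

Definition frac_ideal R I : Prop :=
  [/\ is_submodule R I, (exists x, I x /\ x != 0)
    & exists d, [/\ R d, d != 0 & forall x, I x -> R (d * x)]].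

Definition nonzero_ideal R C : Prop :=
  [/\ is_submodule R C, (forall x, C x -> R x) & exists c, C c /\ c != 0].

Definition iprod I J : K -> Prop := fun z =>
  exists s : seq (K * K), (forall p, p \in s -> I p.1 /\ J p.2) /\
                          z = \sum_(p <- s) p.1 * p.2.

Definition fracinv R I : K -> Prop := fun x => forall y, I y -> R (x * y).

Fixpoint ipow R I (n : nat) : K -> Prop :=
  match n with 0 => R | n.+1 => iprod (ipow R I n) I end.

Definition iscale (a : K) I : K -> Prop := fun z => exists w, I w /\ z = a * w.

(* Dedekind domain: an integral domain (here a subring of its fraction field K)
   in which every nonzero fractional ideal is invertible. *)
Definition dedekind R : Prop :=
  [/\ is_subring R, is_frac_field R &
      forall I, frac_ideal R I -> set_eq (iprod I (fracinv R I)) R].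

Definition inEset R I : Prop := frac_ideal R I /\ (forall x, R x -> I x).

(* the sets A_i, as predicates on subsets of K (membership up to set equality) *)
Fixpoint inA R C (i : nat) (I : K -> Prop) : Prop :=
  match i with
  | 0 => set_eq I R
  | i'.+1 => inA R C i' I \/
      (inEset R I /\
       forall x, iprod I C x -> ~ C x ->
         exists y, C y /\ inA R C i' (iscale (x - y)^-1 (iprod I C)))
  end.

(* [I] = [J] in the ideal class group: I = aJ for some nonzero a in K *)
Definition same_class I J : Prop :=
  exists a : K, a != 0 /\ set_eq I (iscale a J).

End Ideals.

From Stdlib Require Import Classical.
From mathcomp Require Import all_boot all_order all_algebra.
Import GRing.Theory.
Local Open Scope ring_scope.
Set Implicit Arguments. Unset Strict Implicit.

(* Induction on n for I in A_(n+1) \ A_n, writing J := (x - y)^-1 I C.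
   Since I is not in A_n, some x in I C \ C admits no y in C with J in A_(n-1),
   while I in A_(n+1) provides y with J in A_n; by induction J = a C^-n, so
   I C = (x - y) a C^-n and, C being invertible, I = (I C) C^-1 = (x - y) a C^-(n+1).
   For n = 0 we have J = R, and a suitable x exists because I C <= C would give
   I = (I C) C^-1 <= C C^-1 = R. *)

Section FractionalIdeals.
Variable K : fieldType.
Implicit Types (R I J P Q C : K -> Prop).

Definition set_sub I J : Prop := forall x, I x -> J x.

Lemma iprod_mul I J u v : I u -> J v -> iprod I J (u * v).
Proof.
move=> Iu Jv; exists [:: (u, v)]; split; last by rewrite big_seq1.
by move=> p; rewrite inE => /eqP ->.
Qed.

Lemma iprod0 I J : iprod I J 0.
Proof. by exists [::]; rewrite big_nil. Qed.

Lemma iprodD I J u v : iprod I J u -> iprod I J v -> iprod I J (u + v).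
Proof.
move=> [s [Hs ->]] [t [Ht ->]]; exists (s ++ t); split; last by rewrite big_cat.
by move=> p; rewrite mem_cat => /orP[/Hs|/Ht].
Qed.

Lemma iprod_subl I I' J : set_sub I I' -> set_sub (iprod I J) (iprod I' J).
Proof. by move=> sII' z [s [Hs ->]]; exists s; split=> // p /Hs[/sII']. Qed.

Lemma iprod_iscalel c P Q :
  set_eq (iprod (iscale c P) Q) (iscale c (iprod P Q)).
Proof.
move=> u; split.
- move=> [s [Hs ->]]; rewrite big_seq; apply: big_ind.
  + by exists 0; rewrite mulr0; split; first exact: iprod0.
  + move=> _ _ [w1 [H1 ->]] [w2 [H2 ->]].
    by exists (w1 + w2); rewrite mulrDr; split; first exact: iprodD.
  + move=> q /Hs[[p [Pp ->]] Qq].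
    by exists (p * q.2); rewrite mulrA; split; first exact: iprod_mul.
- move=> [_ [[s [Hs ->]] ->]]; rewrite mulr_sumr big_seq.
  apply: big_ind => [|v w|q /Hs[Pq Qq]]; [exact: iprod0 | exact: iprodD |].
  by rewrite mulrA; apply: iprod_mul => //; exists q.1.
Qed.

Lemma subringD R a b : is_subring R -> R a -> R b -> R (a + b).
Proof.
case=> R0 _ RB _ Ra Rb.
by have := RB _ _ Ra (RB _ _ R0 Rb); rewrite sub0r opprK.
Qed.

Lemma frac_ideal_nonzero_ideal R C :
  is_subring R -> nonzero_ideal R C -> frac_ideal R C.
Proof.
case=> _ R1 _ _ [CS CR [c [Cc c0]]]; split=> //; first by exists c.
by exists 1; split=> [||x Cx]; rewrite ?oner_neq0 ?mul1r //; apply: CR.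
Qed.

Lemma dedekind_iprodV1 R C :
  dedekind R -> nonzero_ideal R C -> iprod C (fracinv R C) 1.
Proof.
case=> RS _ Rinv NC; have [_ R1 _ _] := RS.
exact/(Rinv _ (frac_ideal_nonzero_ideal RS NC)).
Qed.

Lemma iprodV_sub R C : is_subring R -> set_sub (iprod C (fracinv R C)) R.
Proof.
move=> RS z [s [Hs ->]]; have [R0 _ _ _] := RS; rewrite big_seq.
apply: big_ind => // [v w|q /Hs[Cq Dq]]; first exact: subringD.
by rewrite mulrC; apply: Dq.
Qed.

Lemma iprodKV_sub R I C :
  is_submodule R I -> set_sub (iprod (iprod I C) (fracinv R C)) I.
Proof.
case=> I0 ID IM z [s [Hs ->]]; rewrite big_seq.
apply: big_ind => // q /Hs[[t [Ht ->]] Dq]; rewrite mulr_suml big_seq.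
apply: big_ind => // r /Ht[Ir Cr].
by rewrite -mulrA mulrC; apply: IM => //; rewrite mulrC; apply: Dq.
Qed.

Lemma sub_iprodKV R I C :
  iprod C (fracinv R C) 1 -> set_sub I (iprod (iprod I C) (fracinv R C)).
Proof.
move=> [s [Hs E1]] u Iu; rewrite -[u]mulr1 E1 mulr_sumr big_seq.
apply: big_ind => [|v w|q /Hs[Cq Dq]]; [exact: iprod0 | exact: iprodD |].
by rewrite mulrA; apply: iprod_mul => //; apply: iprod_mul.
Qed.

Lemma same_class_iscale e I P :
  e != 0 -> same_class (iscale e I) P -> same_class I P.
Proof.
move=> e0 [a [a0 E]]; exists (e^-1 * a); rewrite mulf_neq0 ?invr_eq0 //.
split=> // u; split=> [Iu | [p [Pp ->]]].
- have [p [Pp Ep]] := proj1 (E (e * u)) (ex_intro _ u (conj Iu erefl)).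
  by exists p; rewrite -mulrA -Ep mulKf.
- have [w [Iw Ew]] := proj2 (E (a * p)) (ex_intro _ p (conj Pp erefl)).
  by rewrite -mulrA Ew mulKf.
Qed.

Lemma set_eq_same_class I J : set_eq I J -> same_class I J.
Proof.
move=> E; exists 1; split=> [|u]; first exact: oner_neq0.
by rewrite E; split=> [Ju | [w [Jw ->]]]; [exists u; rewrite mul1r | rewrite mul1r].
Qed.

Lemma notin_inA_succ R C n I :
  inEset R I -> ~ inA R C n.+1 I ->
  exists x, [/\ iprod I C x, ~ C x &
    forall y, C y -> ~ inA R C n (iscale (x - y)^-1 (iprod I C))].
Proof.
move=> EI NI; apply: NNPP => noW; apply: NI; right; split=> // x ICx Cx.
apply: NNPP => noY; apply: noW; exists x; split=> // y Cy JA.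
by apply: noY; exists y.
Qed.

Section Dedekind.
Variables R C : K -> Prop.
Hypotheses (D : dedekind R) (NC : nonzero_ideal R C).

Lemma iprodKV I :
  is_submodule R I -> set_eq (iprod (iprod I C) (fracinv R C)) I.
Proof.
move=> IS u; split; first exact: iprodKV_sub.
exact: (sub_iprodKV (dedekind_iprodV1 D NC)).
Qed.

Lemma sub_ring_of_iprod_sub I : set_sub (iprod I C) C -> set_sub I R.
Proof.
move=> sICC u Iu; have [RS _ _] := D; apply: (iprodV_sub RS).
exact/(iprod_subl sICC)/(sub_iprodKV (dedekind_iprodV1 D NC)).
Qed.

Lemma same_class_iprodV I P :
  is_submodule R I -> same_class (iprod I C) P ->
  same_class I (iprod P (fracinv R C)).
Proof.
move=> IS [a [a0 E]]; exists a; split=> // u.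
rewrite -(iprodKV IS u) -iprod_iscalel.
by split; apply: iprod_subl => v /E.
Qed.

Lemma same_class_shift I P x y :
  is_submodule R I -> ~ C x -> C y ->
  same_class (iscale (x - y)^-1 (iprod I C)) P ->
  same_class I (iprod P (fracinv R C)).
Proof.
move=> IS Cx Cy HJ; apply: same_class_iprodV => //.
apply: same_class_iscale HJ; rewrite invr_eq0 subr_eq0.
by apply: contraPN Cx => /eqP ->.
Qed.

Lemma inEset_neq_witness I :
  inEset R I -> ~ set_eq I R -> exists x, iprod I C x /\ ~ C x.
Proof.
move=> [_ RI] IR; apply: NNPP => noW; apply: IR => u; split=> [|/RI //].
apply: sub_ring_of_iprod_sub => x ICx.
by apply: NNPP => Cx; apply: noW; exists x.
Qed.

End Dedekind.

End FractionalIdeals.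

Theorem lemma2p3 (K : fieldType) (R : K -> Prop) (C : K -> Prop)
    (I : K -> Prop) (i : nat) :
  dedekind R -> nonzero_ideal R C -> (1 <= i)%N ->
  inA R C i I -> ~ inA R C i.-1 I ->
  same_class I (ipow R (fracinv R C) i).
Proof.
move=> D NC; case: i => [//|n] _; elim: n I => [|n IH] I AI NI.
- case: AI => [/NI[] | [EI HI]]; have [IS _ _] := EI.1.
  have [x [ICx Cx]] := inEset_neq_witness D NC EI NI.
  have [y [Cy JR]] := HI x ICx Cx.
  apply: (same_class_shift D NC IS Cx Cy); exact: set_eq_same_class.
- case: AI => [/NI[] | [EI HI]]; have [IS _ _] := EI.1.
  have [x [ICx Cx JnotA]] := notin_inA_succ EI NI.
  have [y [Cy JA]] := HI x ICx Cx.
  apply: (same_class_shift D NC IS Cx Cy); exact: IH _ JA (JnotA y Cy).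
Qed.
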